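(* Let $G_u=(V,E_u)$ be a connected simple undirected graph on $n\ge2$ vertices and let $T_0$ be a spanning tree of $G_u$ with maximum degree $D_0$ and diameter $\Delta_0$. For each integer $K$ with $0\le K\le|E_u\setminus E(T_0)|$, let $H_K$ be the directed graph obtained as follows. (Step 2) Starting with $T:=T_0$, repeat $K$ times: choose an edge $\{u^\star,v^\star\}\in E_u\setminus E(T)$ maximizing the distance between $u^\star$ and $v^\star$ in the current graph $T$ (ties broken arbitrarily) and add it to $T$. (Step 3) Let $E_b$ be the set of bridges of the resulting graph $T$ and let the bridge-connected components be the connected components of $T$ after deleting all bridges. In each bridge-connected component $C$, perform a depth-first search from an arbitrary vertex, obtaining a DFS tree $T_C$ and preorder numbers $pre(\cdot)$; for each edge $\{u,v\}$ of $C$ with $pre(u)<pre(v)$, add the directed link $(u,v)$ to $H_K$ if $\{u,v\}\in T_C$, and the directed link $(v,u)$ otherwise. Finally, for each bridge $\{u,v\}\in E_b$ add both $(u,v)$ and $(v,u)$ to $H_K$. Then every $H_K$ is strongly connected, and $$\min_{K}\Phi(H_K)\le 2D_0\,\Delta_0^2\,(1+D_0)^{4\Delta_0}.$$ In particular this holds when $T_0$ is a minimum-degree spanning tree of $G_u$.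
   Context: For a strongly connected directed graph $H$ on $V$ without self-loops, let $D_H^+$ and $D_H^-$ denote its maximum out-degree and maximum in-degree, and $\Delta(H)$ its diameter (the maximum, over ordered pairs of vertices, of the length of a shortest directed path). The design objective is $\Phi(H):=(D_H^++D_H^-)\,\Delta(H)^2\,(1+D_H^+)^{4\Delta(H)}$. A bridge of an undirected graph is an edge whose removal increases the number of connected components. The preorder number $pre(v)$ is the position in $\{1,\dots,|C|\}$ at which $v$ is first visited by the depth-first search. A minimum-degree spanning tree is a spanning tree minimizing the maximum vertex degree. *)

From mathcomp Require Import all_boot.
Set Implicit Arguments. Unset Strict Implicit. Unset Printing Implicit Defensive.

Section Graphs.
Variable V : finType.

Definition simple_graph (E : {set {set V}}) : Prop :=
  forall e, e \in E -> #|e| = 2.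

Definition adj (E : {set {set V}}) : rel V :=
  fun x y => (x != y) && ([set x; y] \in E).

Definition ugraph_connected (E : {set {set V}}) : Prop :=
  forall x y : V, connect (adj E) x y.

Definition acyclic (E : {set {set V}}) : Prop :=
  forall c : seq V, uniq c -> 3 <= size c -> ~~ cycle (adj E) c.

Definition spanning_tree (Eu T : {set {set V}}) : Prop :=
  T \subset Eu /\ ugraph_connected T /\ acyclic T.

Definition comp (E : {set {set V}}) (x : V) : {set V} :=
  [set y | connect (adj E) x y].

Definition ncomp (E : {set {set V}}) : nat := #|[set comp E x | x : V]|.

Definition bridges (E : {set {set V}}) : {set {set V}} :=
  [set e in E | ncomp E < ncomp (E :\ e)].

Definition walk (r : rel V) (x y : V) (n : nat) : bool :=
  [exists p : n.-tuple V, path r x p && (last x p == y)].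

(* length of a shortest walk from x to y; (all distances in a connected
   graph are < #|V|; #|V| is returned if y is unreachable from x) *)
Definition dist (r : rel V) (x y : V) : nat :=
  \big[minn/#|V|]_(n < #|V| | walk r x y n) n.

Definition diam (r : rel V) : nat := \max_(x : V) \max_(y : V) dist r x y.

Definition max_outdeg (r : rel V) : nat := \max_(x : V) #|[set y | r x y]|.
Definition max_indeg (r : rel V) : nat := \max_(x : V) #|[set y | r y x]|.

Definition arcs (H : {set V * V}) : rel V := fun x y => (x, y) \in H.

Definition strongly_connected (H : {set V * V}) : Prop :=
  forall x y : V, connect (arcs H) x y.

Definition Phi (H : {set V * V}) : nat :=
  (max_outdeg (arcs H) + max_indeg (arcs H)) * (diam (arcs H)) ^ 2
  * (1 + max_outdeg (arcs H)) ^ (4 * diam (arcs H)).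

Definition greedy_step (Eu T T' : {set {set V}}) : Prop :=
  exists u v : V,
    [/\ [set u; v] \in Eu :\: T,
        T' = [set u; v] |: T &
        forall u' v' : V, [set u'; v'] \in Eu :\: T ->
          dist (adj T) u' v' <= dist (adj T) u v].

Inductive greedy_iter (Eu : {set {set V}}) :
  nat -> {set {set V}} -> {set {set V}} -> Prop :=
| greedy_iter0 T : greedy_iter Eu 0 T T
| greedy_iterS n T T' T'' :
    greedy_step Eu T T' -> greedy_iter Eu n T' T'' -> greedy_iter Eu n.+1 T T''.

(* Nondeterministic recursive depth-first search on r.
   dfs_from r stack visited tree visited_final tree_final :
   the stack is the current recursion path (top first), 'visited' lists the
   vertices in order of first visit (preorder), 'tree' holds the DFS-tree edges. *)
Inductive dfs_from (r : rel V) :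
  seq V -> seq V -> {set {set V}} -> seq V -> {set {set V}} -> Prop :=
| dfs_done vis tr : dfs_from r [::] vis tr vis tr
| dfs_push v w st vis tr vis' tr' :
    r v w -> w \notin vis ->
    dfs_from r (w :: v :: st) (rcons vis w) ([set v; w] |: tr) vis' tr' ->
    dfs_from r (v :: st) vis tr vis' tr'
| dfs_pop v st vis tr vis' tr' :
    (forall w, r v w -> w \in vis) ->
    dfs_from r st vis tr vis' tr' ->
    dfs_from r (v :: st) vis tr vis' tr'.

Definition dfs (r : rel V) (x : V) (ord : seq V) (tr : {set {set V}}) : Prop :=
  dfs_from r [:: x] [:: x] set0 ord tr.

Definition pre (ord : seq V) (v : V) : nat := (index v ord).+1.

(* H is a possible result of Step 3 applied to the undirected graph T:
   d assigns to each bridge-connected component C a root, a preorder list and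
   a DFS tree, which must come from a DFS of C (= of T minus bridges) started
   at a vertex of C. *)
Definition step3 (T : {set {set V}}) (H : {set V * V}) : Prop :=
  let F := T :\: bridges T in
  exists d : {set V} -> V * seq V * {set {set V}},
    (forall x : V, let: (rt, ord, tr) := d (comp F x) in
        rt \in comp F x /\ dfs (adj F) rt ord tr) /\
    H = [set p : V * V |
          let: (a, b) := p in
          ([set a; b] \in bridges T) ||
          ((a != b) && ([set a; b] \in F) &&
           (let: (_, ord, tr) := d (comp F a) in
              ((pre ord a < pre ord b) && ([set a; b] \in tr)) ||
              ((pre ord b < pre ord a) && ([set a; b] \notin tr))))].

Definition output (Eu T0 : {set {set V}}) (K : nat) (H : {set V * V}) : Prop :=
  exists T, greedy_iter Eu K T0 T /\ step3 T H.

End Graphs.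

(* For K = 0 no edge is added and every edge of the tree T0 is a bridge, so
   H_0 is T0 with both orientations of each edge: its in- and out-degrees are
   those of T0 and its diameter is that of T0, whence Phi(H_0) is exactly the
   bound.

   Strong connectivity is Robbins' argument. Bridges are oriented both ways,
   and inside a bridge-connected component every edge lies on a cycle. The
   root of the DFS reaches every vertex along tree edges. Conversely, when a
   non-root vertex v is finished, the cycle through the tree edge from v to
   its parent must leave the vertices visited since v; the edge where it
   leaves is not a tree edge, hence is oriented backwards, so v reaches a
   vertex visited before it. By induction on the preorder number every
   vertex reaches the root. *)

From Pilot Require Import Defs.
From mathcomp Require Import all_boot.
From Stdlib Require Import FunctionalExtensionality.
(* [all_boot] shadows [Defs.comp] by function composition [ssrfun.comp]. *)
Import Defs.
Set Implicit Arguments. Unset Strict Implicit. Unset Printing Implicit Defensive.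

Section Connect.
Variables (T : finType) (r : rel T).

Lemma connect_preserved (P : T -> Prop) x y :
  P x -> (forall a b, P a -> r a b -> P b) -> connect r x y -> P y.
Proof.
move=> Px Pr /connectP[p rp ->]; elim: p x Px rp => //= z p IHp x Px /andP[rxz rp].
exact: IHp (Pr _ _ Px rxz) rp.
Qed.

Lemma connect_exit (A : pred T) x y :
  connect r x y -> A x -> ~~ A y -> exists a b, [/\ A a, ~~ A b & r a b].
Proof.
move=> /connectP[p rp ->]; elim: p x rp => [|z p IHp] x /=; first by move=> _ ->.
move=> /andP[rxz rp] Ax nAy; have [Az|nAz] := boolP (A z); first exact: IHp rp Az nAy.
by exists x, z.
Qed.

End Connect.

Section UndirectedGraphs.
Variable V : finType.
Implicit Types (E : {set {set V}}) (a b u w x y : V).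

Lemma set2_inj a b u w : [set a; b] = [set u; w] ->
  (a = u /\ b = w) \/ (a = w /\ b = u).
Proof.
move=> eab.
have /set2P[] : a \in [set u; w] by rewrite -eab set21.
all: have /set2P[] : b \in [set u; w] by rewrite -eab set22.
all: have /set2P[] : u \in [set a; b] by rewrite eab set21.
all: have /set2P[] : w \in [set a; b] by rewrite eab set22.
all: by move=> *; subst; auto.
Qed.

Lemma adj_sym E : symmetric (adj E).
Proof. by move=> x y; rewrite /adj eq_sym setUC. Qed.

Lemma connect_adj_sym E : connect_sym (adj E).
Proof. exact: sym_connect_sym (adj_sym E). Qed.

Lemma adj_sub E E' : E \subset E' -> subrel (adj E) (adj E').
Proof. by move=> sEE' x y; rewrite /adj => /andP[-> /(subsetP sEE') ->]. Qed.

Lemma connect_adj_sub E E' x y :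
  E \subset E' -> connect (adj E) x y -> connect (adj E') x y.
Proof. by move=> sEE'; apply: connect_sub => a b /(adj_sub sEE')/connect1. Qed.

Lemma comp_connect E x y : connect (adj E) x y -> comp E x = comp E y.
Proof.
move=> cxy; apply/setP => z; rewrite !inE; apply/idP/idP; last exact: connect_trans.
by apply: connect_trans; rewrite connect_adj_sym.
Qed.

Lemma connect_setU1 E u w x y : connect (adj ([set u; w] |: E)) x y ->
  [\/ connect (adj E) x y,
      connect (adj E) x u /\ connect (adj E) w y |
      connect (adj E) x w /\ connect (adj E) u y].
Proof.
move=> cxy; pattern y; apply: (connect_preserved _ _ cxy) => /= [|a b Pa /andP[nab]].
  by constructor 1.
have c0 := connect0 (adj E).
rewrite !inE => /orP[/eqP/set2_inj[][? ?] | abE]; subst.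
- by case: Pa => [xu|[xu _]|[xw _]]; [apply: Or32 | apply: Or32 | apply: Or31].
- by case: Pa => [xw|[xu _]|[xw _]]; [apply: Or33 | apply: Or31 | apply: Or33].
have ext z : connect (adj E) z a -> connect (adj E) z b.
  by move=> cza; apply: connect_trans cza (connect1 _); rewrite /adj nab abE.
by case: Pa => [/ext xb|[xu /ext wb]|[xw /ext ub]];
  [apply: Or31 | apply: Or32 | apply: Or33].
Qed.

End UndirectedGraphs.

Section Bridges.
Variable V : finType.
Implicit Types (E : {set {set V}}) (u w : V).

Lemma comp_setD1_cycle E u w : connect (adj (E :\ [set u; w])) u w ->
  comp (E :\ [set u; w]) =1 comp E.
Proof.
move=> cuw z; apply/setP => y; rewrite !inE; apply/idP/idP.
  exact/connect_adj_sub/subD1set.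
apply: connect_sub => a b /andP[nab abE].
have [/set2_inj[][-> ->] // | neab] := eqVneq [set a; b] [set u; w].
  by rewrite connect_adj_sym.
by apply: connect1; rewrite /adj nab !inE neab abE.
Qed.

Lemma ncomp_setD1_cut E u w : u != w -> [set u; w] \in E ->
  ~~ connect (adj (E :\ [set u; w])) u w -> ncomp E < ncomp (E :\ [set u; w]).
Proof.
move=> nuw uwE ncuw; set E' := E :\ [set u; w].
(* Components of E are unions of components of E', so gluing maps the latter
   onto the former; it identifies the components of u and w. *)
pose glue (C : {set V}) := \bigcup_(z in C) comp E z.
have glue_comp z : glue (comp E' z) = comp E z.
  apply/setP => y; apply/bigcupP/idP => [[z' z'z yz']|yz].
    by rewrite inE in z'z; rewrite (comp_connect (connect_adj_sub (subD1set _ _) z'z)).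
  by exists z; rewrite // inE connect0.
have glue_im : glue @: [set comp E' x | x : V] = [set comp E x | x : V].
  by rewrite -imset_comp; apply: eq_imset => z /=; rewrite glue_comp.
rewrite /ncomp -glue_im ltn_neqAle leq_imset_card andbT.
apply/imset_injP => glue_inj.
have uw : comp E u = comp E w by apply/comp_connect/connect1; rewrite /adj nuw uwE.
have := glue_inj (comp E' u) (comp E' w) (imset_f _ isT) (imset_f _ isT).
rewrite !glue_comp => /(_ uw)/setP/(_ w); rewrite !inE connect0.
by rewrite (negbTE ncuw).
Qed.

Lemma bridgeE E u w : u != w -> [set u; w] \in E ->
  ([set u; w] \in bridges E) = ~~ connect (adj (E :\ [set u; w])) u w.
Proof.
move=> nuw uwE; rewrite inE uwE /=.
have [cuw|ncuw] := boolP (connect _ u w); last exact: ncomp_setD1_cut.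
by rewrite /ncomp (eq_imset _ (comp_setD1_cycle cuw)) ltnn.
Qed.

End Bridges.

Section Cycles.
Variable V : finType.
Implicit Types (E : {set {set V}}) (a b u w x y : V).

Lemma connect_setD1_cut E x y u w :
  x != y -> [set x; y] \in E -> [set u; w] != [set x; y] ->
  connect (adj (E :\ [set x; y])) x y -> ~~ connect (adj (E :\ [set u; w])) u w ->
  connect (adj (E :\ [set u; w] :\ [set x; y])) x y.
Proof.
move=> nxy xyE uw_xy cxy ncuw.
have [uwE|uwNE] := boolP ([set u; w] \in E); last first.
  by have -> : E :\ [set u; w] = E by apply/setDidPl; rewrite disjoint_sym disjoints1.
set E' := E :\ [set u; w] :\ [set x; y].
have E'U : E :\ [set x; y] = [set u; w] |: E'.
  by apply/setP => e; rewrite !inE; case: (eqVneq e [set u; w]) => [->|]; rewrite ?uw_xy.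
have sE' := connect_adj_sub (subD1set (E :\ [set u; w]) [set x; y]).
have xy : adj (E :\ [set u; w]) x y by rewrite /adj nxy !inE eq_sym uw_xy xyE.
have yx : adj (E :\ [set u; w]) y x by rewrite adj_sym.
rewrite E'U in cxy; case: (connect_setU1 cxy) => [// | [xu wy] | [xw uy]].
all: case/negP: ncuw.
- rewrite connect_adj_sym in xu; rewrite connect_adj_sym in wy.
  exact: connect_trans (sE' _ _ xu) (connect_trans (connect1 xy) (sE' _ _ wy)).
- exact: connect_trans (sE' _ _ uy) (connect_trans (connect1 yx) (sE' _ _ xw)).
Qed.

Lemma nonbridge_cycle E : (forall e, e \in E -> #|e| = 2) ->
  forall a b, a != b -> [set a; b] \in E :\: bridges E ->
  connect (adj ((E :\: bridges E) :\ [set a; b])) a b.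
Proof.
move=> E2 a b nab; rewrite inE => /andP[abNB abE].
(* Delete the bridges one at a time; by connect_setD1_cut the cycle through
   {a, b} survives each deletion. *)
suff cycle_minus s : all (mem (bridges E)) s ->
    connect (adj ((E :\: [set e in s]) :\ [set a; b])) a b.
  have := cycle_minus (enum (bridges E)); rewrite set_enum; apply.
  by apply/allP => e; rewrite mem_enum.
elim: s => [_|e s IHs /= /andP[eB sB]].
  have -> : E :\: [set e in [::]] = E by apply/setP => e; rewrite !inE in_nil.
  by move: abNB; rewrite (bridgeE nab abE) negbK.
have eE : e \in E by move: eB; rewrite inE => /andP[].
have /cards2P[u [w [nuw uw]]] : #|e| == 2 by rewrite E2.
subst e; have -> : E :\: [set e in [set u; w] :: s] = (E :\: [set e in s]) :\ [set u; w].
  by apply/setP => f; rewrite !inE negb_or andbA.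
have ab_uw : [set u; w] != [set a; b] by apply: contraNneq abNB => <-.
apply: connect_setD1_cut => //.
- rewrite !inE abE andbT; apply: contraNN abNB => abs.
  by have := allP sB _ abs.
- exact: IHs.
- apply: contraTN eB => cuw; rewrite (bridgeE nuw eE) negbK.
  by apply: connect_adj_sub cuw; apply/setSD/subsetDl.
Qed.

End Cycles.

Lemma index_rcons_mem (T : eqType) (s : seq T) x y :
  x \in s -> index x (rcons s y) = index x s.
Proof. by move=> xs; rewrite -cats1 index_cat xs. Qed.

Lemma index_rcons_notin (T : eqType) (s : seq T) y :
  y \notin s -> index y (rcons s y) = size s.
Proof. by move=> yNs; rewrite -cats1 index_cat (negbTE yNs) /= eqxx addn0. Qed.

Section DfsOrientation.
Variables (V : finType) (F : {set {set V}}) (rt : V).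
Hypothesis F_cycle : forall a b : V, a != b -> [set a; b] \in F ->
  connect (adj (F :\ [set a; b])) a b.

(* Step 3 within one component: tree edges point away from the root, the other
   edges towards it; [index _ vis] is the preorder number minus one. *)
Definition dfs_arc (vis : seq V) (tr : {set {set V}}) : rel V := fun a b =>
  [&& adj F a b, a \in vis, b \in vis &
      ((index a vis < index b vis) && ([set a; b] \in tr)) ||
      ((index b vis < index a vis) && ([set a; b] \notin tr))].

(* State of the search: [st] is the recursion stack (top first, root at the
   bottom), [vis] the visited vertices in preorder, [tr] the tree edges.
   A vertex is finished when it is visited and no longer on the stack. *)
Record dfs_inv (st vis : seq V) (tr : {set {set V}}) : Prop := DfsInv {
  root_visited : rt \in vis;
  stack_visited : {subset st <= vis};
  stack_bottom : last rt st = rt;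
  stack_index : pairwise (fun a b => index b vis < index a vis) st;
  stack_tree : sorted (fun a b => [set b; a] \in tr) st;
  tree_visited : forall a b, [set a; b] \in tr -> a \in vis;
  tree_sub : tr \subset F;
  tree_parent : forall a a' b, [set a; b] \in tr -> [set a'; b] \in tr ->
    index a vis < index b vis -> index a' vis < index b vis -> a = a';
  tree_stack : forall a b v, [set a; b] \in tr -> index a vis < index b vis ->
    v \in st -> index v vis < index b vis -> index v vis <= index a vis;
  stack_reach : forall v z, v \in st -> z \in vis -> index v vis <= index z vis ->
    connect (dfs_arc vis tr) v z;
  root_reach : forall z, z \in vis -> connect (dfs_arc vis tr) rt z;
  finished_closed : forall z y, z \in vis -> z \notin st -> adj F z y -> y \in vis;
  finished_back : forall z, z \in vis -> z \notin st -> z != rt ->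
    exists2 b, index b vis < index z vis & connect (dfs_arc vis tr) z b }.

Section Push.
Variables (v w : V) (st vis : seq V) (tr : {set {set V}}).
Hypotheses (I : dfs_inv (v :: st) vis tr) (vw : adj F v w) (wNvis : w \notin vis).

Local Notation vis' := (rcons vis w).
Local Notation tr' := ([set v; w] |: tr).

Let v_visited : v \in vis. Proof. exact/(stack_visited I)/mem_head. Qed.
Let index_old x : x \in vis -> index x vis' = index x vis.
Proof. exact: index_rcons_mem. Qed.
Let index_new : index w vis' = size vis. Proof. exact: index_rcons_notin. Qed.
Let in_vis' x : (x \in vis') = (x == w) || (x \in vis).
Proof. by rewrite mem_rcons in_cons. Qed.

Lemma connect_push x y :
  connect (dfs_arc vis tr) x y -> connect (dfs_arc vis' tr') x y.
Proof.
apply: connect_sub => a b /and4P[ab avis bvis ori]; apply: connect1.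
have ab_vw : [set a; b] != [set v; w].
  by apply: contraNneq wNvis => /set2_inj[][? ?]; subst.
by rewrite /dfs_arc ab !in_vis' avis bvis !orbT !index_old // !inE (negbTE ab_vw).
Qed.

Lemma dfs_arc_push : dfs_arc vis' tr' v w.
Proof.
by rewrite /dfs_arc vw !in_vis' eqxx v_visited orbT index_old // index_new index_mem
  v_visited !inE eqxx.
Qed.

Lemma stack_top x : x \in v :: st -> index x vis <= index v vis.
Proof.
rewrite in_cons => /orP[/eqP xv | xst]; first by rewrite xv.
by have /andP[/allP/(_ x xst)/ltnW] := stack_index I.
Qed.

Lemma tree_push x y : [set x; y] \in tr' -> index x vis' < index y vis' ->
  (x = v /\ y = w) \/
  [/\ [set x; y] \in tr, x \in vis, y \in vis & index x vis < index y vis].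
Proof.
rewrite !inE => /predU1P[/set2_inj[][-> ->] | xy]; first by left.
  by rewrite index_new index_old // ltnNge ltnW // index_mem.
have xvis := tree_visited I xy.
have yvis : y \in vis by apply: (tree_visited I (b := x)); rewrite setUC.
by rewrite !index_old // => xy_lt; right.
Qed.

Lemma push_stack_index :
  pairwise (fun a b => index b vis' < index a vis') [:: w, v & st].
Proof.
rewrite pairwise_cons; apply/andP; split.
  by apply/allP => x /(stack_visited I) xvis; rewrite index_new index_old // index_mem.
rewrite (eq_in_pairwise (P := mem vis) (r' := fun a b => index b vis < index a vis)).
- exact: stack_index I.
- by move=> a b avis bvis; rewrite /= !index_old.
- exact/allP/(stack_visited I).
Qed.

Lemma push_tree_visited a b : [set a; b] \in tr' -> a \in vis'.
Proof.
rewrite !inE in_vis' => /predU1P[/set2_inj[][-> _] | /(tree_visited I) ->].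
all: by rewrite ?eqxx ?v_visited ?orbT.
Qed.

Lemma push_tree_parent a a' b : [set a; b] \in tr' -> [set a'; b] \in tr' ->
  index a vis' < index b vis' -> index a' vis' < index b vis' -> a = a'.
Proof.
move=> ab a'b /(tree_push ab)[[av bw] | [ab_tr _ bvis ab_lt]]
  /(tree_push a'b)[[a'v bw'] | [a'b_tr _ bvis' a'b_lt]].
- by rewrite av a'v.
- by move: wNvis; rewrite -bw bvis'.
- by move: wNvis; rewrite -bw' bvis.
- exact: (tree_parent I ab_tr a'b_tr ab_lt a'b_lt).
Qed.

Lemma push_tree_stack a b x : [set a; b] \in tr' -> index a vis' < index b vis' ->
  x \in [:: w, v & st] -> index x vis' < index b vis' -> index x vis' <= index a vis'.
Proof.
move=> ab /(tree_push ab) ab_cases; rewrite in_cons => /predU1P[-> | xst].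
  case: ab_cases => [[_ ->] | [_ _ bvis _]]; first by rewrite ltnn.
  by rewrite index_new index_old // ltnNge ltnW // index_mem.
have xvis := stack_visited I xst.
case: ab_cases => [[-> ->] | [ab_tr avis bvis ab_lt]].
  by rewrite !(index_old xvis, index_old v_visited) => _; apply: stack_top.
by rewrite !(index_old xvis, index_old avis, index_old bvis); apply: (tree_stack I ab_tr).
Qed.

Lemma push_stack_reach x z : x \in [:: w, v & st] -> z \in vis' ->
  index x vis' <= index z vis' -> connect (dfs_arc vis' tr') x z.
Proof.
rewrite in_cons in_vis' => /predU1P[-> | xst] /predU1P[-> | zvis].
- by rewrite connect0.
- by rewrite index_new index_old // leqNgt index_mem zvis.
- move=> _; apply: connect_trans (connect1 dfs_arc_push); apply: connect_push.
  exact: (stack_reach I xst v_visited (stack_top xst)).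
- have xvis := stack_visited I xst.
  by rewrite !(index_old xvis, index_old zvis) => xz; apply/connect_push/(stack_reach I).
Qed.

Lemma push_finished_back z : z \in vis' -> z \notin [:: w, v & st] -> z != rt ->
  exists2 b, index b vis' < index z vis' & connect (dfs_arc vis' tr') z b.
Proof.
rewrite in_vis' in_cons negb_or => /predU1P[-> | zvis]; first by rewrite eqxx.
move=> /andP[_ zNst] zrt; have [b bz zb] := finished_back I zvis zNst zrt.
have bvis : b \in vis by rewrite -index_mem (ltn_trans bz) ?index_mem.
by exists b; rewrite ?index_old //; apply: connect_push.
Qed.

Lemma push_inv : dfs_inv [:: w, v & st] vis' tr'.
Proof.
split.
- by rewrite in_vis' (root_visited I) orbT.
- by move=> x; rewrite in_cons in_vis' => /predU1P[-> | /(stack_visited I) ->];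
    rewrite ?eqxx ?orbT.
- exact: stack_bottom I.
- exact: push_stack_index.
- by rewrite /= !inE setUC eqxx; apply: sub_path (stack_tree I) => a b ab;
    rewrite inE ab orbT.
- exact: push_tree_visited.
- by rewrite subUset sub1set (tree_sub I) andbT; case/andP: vw.
- exact: push_tree_parent.
- exact: push_tree_stack.
- exact: push_stack_reach.
- move=> z; rewrite in_vis' => /predU1P[-> | /(root_reach I)/connect_push //].
  exact: connect_trans (connect_push (root_reach I v_visited)) (connect1 dfs_arc_push).
- move=> z y; rewrite in_vis' in_cons negb_or => /predU1P[-> | zvis].
    by rewrite eqxx.
  by move=> /andP[_ zNst] zy; rewrite in_vis' (finished_closed I zvis zNst zy) orbT.
- exact: push_finished_back.
Qed.

End Push.

Section Pop.
Variables (v : V) (st vis : seq V) (tr : {set {set V}}).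
Hypotheses (I : dfs_inv (v :: st) vis tr) (v_done : forall w, adj F v w -> w \in vis).

Let v_visited : v \in vis. Proof. exact/(stack_visited I)/mem_head. Qed.

(* The tree edge from v to its parent p lies on a cycle of F; this cycle
   leaves the vertices visited from v on through a non-tree edge, which is
   oriented backwards. *)
Lemma pop_finished_back : v != rt ->
  exists2 b, index b vis < index v vis & connect (dfs_arc vis tr) v b.
Proof.
case: st I => [|p s] I' vrt; first by case/eqP: vrt; apply: (stack_bottom I').
have /andP[/allP p_lt _] := stack_index I'.
have pv : index p vis < index v vis by apply: p_lt; rewrite mem_head.
have pvis : p \in vis by apply: (stack_visited I'); rewrite !in_cons eqxx orbT.
have pv_tr : [set p; v] \in tr by have /andP[] := stack_tree I'.
have vp : v != p by apply: contraTneq pv => ->; rewrite ltnn.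
have vpF : [set v; p] \in F by rewrite setUC (subsetP (tree_sub I')).
pose A z := (z \in vis) && (index v vis <= index z vis).
have [a [b [/andP[avis va] Nb ab]]] :
    exists a b, [/\ A a, ~~ A b & adj (F :\ [set v; p]) a b].
  apply: connect_exit (F_cycle vp vpF) _ _;
    by rewrite /A ?v_visited ?leqnn ?pvis -?ltnNge.
have abF : adj F a b := adj_sub (subD1set _ _) ab.
have ab_vp : [set a; b] != [set v; p] by case/andP: ab => _; rewrite !inE => /andP[].
have bvis : b \in vis.
  have [av | av] := eqVneq a v; first by apply: v_done; rewrite -av.
  apply: (finished_closed I' avis _ abF); rewrite !in_cons negb_or av /=.
  by apply: contraTN va => /p_lt; rewrite -ltnNge.
have bv : index b vis < index v vis by move: Nb; rewrite /A bvis -ltnNge.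
have ab_Ntr : [set a; b] \notin tr.
  apply/negP; rewrite setUC => ba_tr; have [av | av] := eqVneq a v.
    rewrite av in ba_tr ab_vp.
    by rewrite (tree_parent I' ba_tr pv_tr bv pv) eqxx in ab_vp.
  have va' : index v vis < index a vis.
    by rewrite ltn_neqAle va andbT; apply: contra av => /eqP/index_inj-> //.
  have := tree_stack I' ba_tr (leq_ltn_trans (ltnW bv) va') (mem_head _ _) va'.
  by rewrite leqNgt bv.
exists b => //; apply: connect_trans (stack_reach I' (mem_head _ _) avis va) (connect1 _).
by rewrite /dfs_arc abF avis bvis (leq_trans bv va) ab_Ntr orbT.
Qed.

Lemma pop_inv : dfs_inv st vis tr.
Proof.
have st_sub x : x \in st -> x \in v :: st by rewrite in_cons => ->; rewrite orbT.
split; try by case: I.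
- by move=> x /st_sub /(stack_visited I).
- by case: st (stack_bottom I).
- by have /andP[] := stack_index I.
- exact: path_sorted (stack_tree I).
- by move=> a b x ab ab_lt /st_sub; apply: (tree_stack I ab ab_lt).
- by move=> x z /st_sub; apply: (stack_reach I).
- move=> z y zvis zNst; have [-> | zv] := eqVneq z v; first exact: v_done.
  by apply: (finished_closed I zvis); rewrite in_cons negb_or zv.
- move=> z zvis zNst; have [-> | zv] := eqVneq z v; first exact: pop_finished_back.
  by apply: (finished_back I zvis); rewrite in_cons negb_or zv.
Qed.

End Pop.

Lemma dfs_from_inv st vis tr vis' tr' : dfs_from (adj F) st vis tr vis' tr' ->
  dfs_inv st vis tr -> dfs_inv [::] vis' tr'.
Proof.
elim=> {st vis tr vis' tr'} //
  [v w st vis tr vis' tr' vw wNvis _ IH | v st vis tr vis' tr' v_done _ IH] I.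
- exact: IH (push_inv I vw wNvis).
- exact: IH (pop_inv I v_done).
Qed.

Lemma dfs_inv_root : dfs_inv [:: rt] [:: rt] set0.
Proof.
split=> //=.
- exact: mem_head.
- by move=> a b; rewrite inE.
- exact: sub0set.
- by move=> a a' b; rewrite inE.
- by move=> a b x; rewrite inE.
- by move=> x z; rewrite !mem_seq1 => /eqP -> /eqP ->; rewrite connect0.
- by move=> z; rewrite mem_seq1 => /eqP ->; rewrite connect0.
- by move=> z y ->.
- by move=> z ->.
Qed.

Theorem dfs_strongly_connected ord tr : dfs (adj F) rt ord tr ->
  [/\ rt \in ord, forall z y, z \in ord -> adj F z y -> y \in ord &
      forall z y, z \in ord -> y \in ord -> connect (dfs_arc ord tr) z y].
Proof.
move=> /dfs_from_inv/(_ dfs_inv_root) I.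
have back_root n z : index z ord < n -> z \in ord -> connect (dfs_arc ord tr) z rt.
  elim: n z => // n IHn z zn zord; have [-> | zrt] := eqVneq z rt; first exact: connect0.
  have [b bz zb] := finished_back I zord isT zrt.
  have bord : b \in ord by rewrite -index_mem (ltn_trans bz) ?index_mem.
  exact: connect_trans zb (IHn b (leq_trans bz zn) bord).
split=> [|z y zord|z y zord yord]; first exact: (root_visited I).
  exact: (finished_closed I zord isT).
exact: connect_trans (back_root _ z (ltnSn _) zord) (root_reach I yord).
Qed.

End DfsOrientation.

Section Step3.
Variable V : finType.
Implicit Types (T : {set {set V}}) (H : {set V * V}).

Lemma step3_connect_edge T H : (forall e, e \in T -> #|e| = 2) ->
  step3 T H -> forall a b, adj T a b -> connect (arcs H) a b.
Proof.
move=> T2 [d [d_dfs ->]] a b /andP[nab abT]; set F := T :\: bridges T.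
have [abB | abNB] := boolP ([set a; b] \in bridges T).
  by apply: connect1; rewrite /arcs inE /= abB.
have abF : [set a; b] \in F by rewrite inE abNB abT.
case da: (d (comp F a)) => [[rt ord] tr].
have := d_dfs a; rewrite da inE => -[a_rt rt_dfs].
have [rt_ord ord_closed ord_conn] := dfs_strongly_connected (nonbridge_cycle T2) rt_dfs.
have Frt z : connect (adj F) rt z -> z \in ord.
  by apply: (connect_preserved (P := fun z => z \in ord)) => // x y; apply: ord_closed.
have a_ord : a \in ord by apply: Frt; rewrite connect_adj_sym.
have b_ord : b \in ord by apply: ord_closed a_ord _; rewrite /adj nab abF.
apply: connect_sub (ord_conn a b a_ord b_ord) => x y xy; apply: connect1.
have /and4P[/andP[nxy xyF] x_ord _ ori] := xy.
have rt_x : connect (adj F) rt x.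
  apply: connect_sub (ord_conn rt x rt_ord x_ord) => u w /and4P[uw _ _ _].
  exact: connect1.
have comp_x : comp F x = comp F a by rewrite -(comp_connect rt_x) (comp_connect a_rt).
by rewrite /arcs inE /= comp_x da nxy xyF /pre !ltnS ori orbT.
Qed.

Lemma step3_strongly_connected T H : (forall e, e \in T -> #|e| = 2) ->
  ugraph_connected T -> step3 T H -> strongly_connected H.
Proof.
move=> T2 Tconn T_H x y; apply: connect_sub (Tconn x y).
exact: step3_connect_edge T_H.
Qed.

Lemma greedy_iter_subset (Eu T T' : {set {set V}}) n : greedy_iter Eu n T T' ->
  T \subset T' /\ (T \subset Eu -> T' \subset Eu).
Proof.
elim=> {n T T'} [// | n T T' T'' [u [w [uw_new -> _]]] _ [sub' sub'E]].
have /setDP[uwE _] := uw_new.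
split; first exact: subset_trans (subsetUr _ _) sub'.
by move=> TEu; apply: sub'E; rewrite subUset sub1set uwE.
Qed.

Lemma tree_bridges T : (forall e, e \in T -> #|e| = 2) -> acyclic T ->
  bridges T = T.
Proof.
move=> T2 acT; apply/setP => e; apply/idP/idP; first by rewrite inE => /andP[].
move=> eT; have /cards2P[u [w [nuw uw]]] : #|e| == 2 by rewrite T2.
subst e; rewrite bridgeE //; apply/negP => /connectP[p pp].
case: (shortenP pp) => p' pp' p'uniq _ lastp'.
have cyc : cycle (adj T) (u :: p').
  rewrite /= rcons_path -lastp' (sub_path (adj_sub (subD1set T [set u; w])) pp').
  by rewrite /adj eq_sym nuw setUC eT.
suff /(acT _ p'uniq) : 3 <= size (u :: p') by rewrite cyc.
case: p' pp' p'uniq lastp' {cyc} => [_ _ /= wu | x [|y q]] //=.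
  by rewrite wu eqxx in nuw.
move=> /andP[/andP[_]]; rewrite !inE => /andP[ux_uw _] _ _ xw.
by rewrite xw eqxx in ux_uw.
Qed.

Lemma step3_tree T H : (forall e, e \in T -> #|e| = 2) -> acyclic T ->
  step3 T H -> arcs H = adj T.
Proof.
move=> T2 acT [d [_ ->]]; rewrite tree_bridges // setDv.
apply: functional_extensionality => a; apply: functional_extensionality => b.
rewrite /arcs inE /= inE andbF /= orbF /adj; have [<- | //] := eqVneq a b.
by apply/negbTE/negP; rewrite setUid => /T2; rewrite cards1.
Qed.

Lemma max_indeg_sym (r : rel V) : symmetric r -> max_indeg r = max_outdeg r.
Proof. by move=> rC; apply: eq_bigr => x _; apply: eq_card => y; rewrite !inE rC. Qed.

End Step3.

Unset Implicit Arguments.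

Theorem theorem2 (V : finType) (Eu T0 : {set {set V}}) (H : nat -> {set V * V}) :
  2 <= #|V| ->
  simple_graph Eu ->
  ugraph_connected Eu ->
  spanning_tree Eu T0 ->
  (forall K, K <= #|Eu :\: T0| -> output Eu T0 K (H K)) ->
  (forall K, K <= #|Eu :\: T0| -> strongly_connected (H K)) /\
  \big[minn/Phi (H 0)]_(K < #|Eu :\: T0|.+1) Phi (H K)
    <= 2 * max_outdeg (adj T0) * diam (adj T0) ^ 2
         * (1 + max_outdeg (adj T0)) ^ (4 * diam (adj T0)).
Proof.
move=> _ Eu2 _ [T0Eu [T0conn T0acyc]] HK; split.
  move=> K /HK[T [T0T T_H]]; have [T0T' /(_ T0Eu) TEu] := greedy_iter_subset T0T.
  apply: (step3_strongly_connected _ _ T_H) => [e /(subsetP TEu) | x y].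
    exact: Eu2.
  exact: connect_adj_sub T0T' (T0conn x y).
have T02 e : e \in T0 -> #|e| = 2 by move/(subsetP T0Eu); apply: Eu2.
have [T [T0T T_H0]] := HK 0 (leq0n _).
have T0_H0 : step3 T0 (H 0) by have -> : T0 = T by inversion T0T.
have H0T0 := step3_tree T02 T0acyc T0_H0.
rewrite big_ord_recl /=; apply: leq_trans (geq_minl _ _) _.
by rewrite /Phi H0T0 max_indeg_sym ?addnn -?mul2n //; apply: adj_sym.
Qed.
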